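(* Let $C_{-1},C_0,C_1$ be nonnegative $m\times m$ matrices, where $m$ may be countably infinite, and let $C_*(\theta)=e^{-\theta}C_{-1}+C_0+e^{\theta}C_1$ for $\theta\in\mathbb{R}$. Assume that $C_*(0)^n$ is finite for every $n\in\mathbb{Z}_+$ and that $C_*(0)$ is irreducible. For a positive integer $k$, let $C^{[k]}(\theta)$ be the $k\times k$ block matrix (blocks of size $m\times m$, block indices $1,\dots,k$) whose $(i,i')$ block is the sum of: $C_0$ if $i'=i$; $C_1$ if $i'=i+1$; $C_{-1}$ if $i'=i-1$; $e^{-\theta}C_{-1}$ if $(i,i')=(1,k)$; $e^{\theta}C_1$ if $(i,i')=(k,1)$ (and $O$ if none applies). Then $\mathrm{cp}(C_*(\theta))=\mathrm{cp}(C^{[k]}(k\theta))$ for every $\theta\in\mathbb{R}$.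
   Context: For a nonnegative square matrix $A$ of finite or countable dimension, the convergence parameter is $\mathrm{cp}(A)=\sup\{r\ge0:\sum_{n\ge0}r^nA^n<\infty\text{ elementwise}\}$. Thus $C^{[k]}(\theta)$ is block tridiagonal with $C_{-1},C_0,C_1$ on the sub-, main and super-diagonals, plus corner blocks $e^{-\theta}C_{-1}$ in position $(1,k)$ and $e^{\theta}C_1$ in position $(k,1)$; contributions landing in the same block position (when $k\le2$) are added. *)

From HB Require Import structures.
From mathcomp Require Import all_boot all_order all_algebra.
From mathcomp Require Import all_classical all_reals all_analysis.
Set Implicit Arguments. Unset Strict Implicit. Unset Printing Implicit Defensive.
Import Order.TTheory GRing.Theory Num.Theory.
Local Open Scope classical_set_scope.
Local Open Scope ring_scope.

(* Entries of products/powers are computed in the extended reals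
   \bar R as (order-independent) sums of nonnegative terms, so they may be +oo. *)

Section NonnegMatrices.
Variables (R : realType) (T : countType).

Definition emx := T -> T -> \bar R.

Definition emx_of (A : T -> T -> R) : emx := fun i j => (A i j)%:E.

Definition emx_mul (A B : emx) : emx :=
  fun i j => (\esum_(l in [set: T]) (A i l * B l j))%E.

Definition emx_id : emx := fun i j => if i == j then 1%E else 0%E.

Fixpoint emx_pow (A : emx) (n : nat) : emx :=
  match n with
  | 0%N => emx_id
  | n'.+1 => emx_mul (emx_pow A n') A
  end.

Definition mx_powers_finite (A : T -> T -> R) : Prop :=
  forall (n : nat) (i j : T), (emx_pow (emx_of A) n i j < +oo)%E.

Definition mx_irreducible (A : T -> T -> R) : Prop :=
  forall i j : T, exists n : nat, (0 < n)%N /\ (0 < emx_pow (emx_of A) n i j)%E.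

Definition cp (A : T -> T -> R) : \bar R :=
  ereal_sup [set (r%:E)%E | r in
    [set r : R | 0 <= r /\ forall i j : T,
        (\esum_(n in [set: nat]) ((r ^+ n)%:E * emx_pow (emx_of A) n i j) < +oo)%E]].

End NonnegMatrices.

Definition Cstar (R : realType) (T : Type) (Cm1 C0 C1 : T -> T -> R) (theta : R)
  : T -> T -> R :=
  fun a b => expR (- theta) * Cm1 a b + C0 a b + expR theta * C1 a b.

(* C^{[k]}(theta): k x k block matrix, block indices 0..k-1 (0-based, i.e.
   block i here is block i+1 of the paper); all applicable contributions are
   added. *)
Definition Cblock (R : realType) (T : Type) (Cm1 C0 C1 : T -> T -> R) (k : nat)
  (theta : R) : ('I_k * T) -> ('I_k * T) -> R :=
  fun p q =>
    let i := nat_of_ord p.1 in let i' := nat_of_ord q.1 in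
    let a := p.2 in let b := q.2 in
      (if i' == i then C0 a b else 0)
    + (if i' == i.+1 then C1 a b else 0)
    + (if i'.+1 == i then Cm1 a b else 0)
    + (if (i == 0%N) && (i' == k.-1) then expR (- theta) * Cm1 a b else 0)
    + (if (i == k.-1) && (i' == 0%N) then expR theta * C1 a b else 0).
Arguments Cblock [R T] Cm1 C0 C1 k theta _ _.

From HB Require Import structures.
From mathcomp Require Import all_boot all_order all_algebra.
From mathcomp Require Import all_classical all_reals all_analysis.
From mathcomp Require Import ring.
Import Order.TTheory GRing.Theory Num.Theory.
Local Open Scope classical_set_scope.
Local Open Scope ring_scope.

(* Give block [j] the weight [g j = e^(j theta)].  The weighted row sums of
   [B = C^[k](k theta)] over the blocks reproduce [C = C_*(theta)]:
   [sum_j B((l,c),(j,b)) g j = g l * C(c,b)], the factors [e^(-+k theta)] of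
   the corner blocks exactly compensating the jump of the weight between
   blocks [0] and [k-1].  Multiplying on the right, the identity propagates to
   all powers,
   [sum_j B^n((i,a),(j,b)) g j = g i * C^n(a,b)], and hence to the power series
   [sum_n r^n B^n] and [sum_n r^n C^n].  The weights being positive and the
   blocks finitely many, one series is entrywise finite iff the other is, so
   the two sets of radii defining the convergence parameters coincide. *)

Section ExtendedSums.
Local Open Scope ereal_scope.

Lemma ge0_esumZl [R : realType] (T : choiceType) (S : set T) (c : R) (f : T -> \bar R) :
  (0 <= c)%R -> (forall x, S x -> 0 <= f x) ->
  \esum_(i in S) (c%:E * f i) = c%:E * \esum_(i in S) f i.
Proof.
move=> c0 f0; rewrite /esum -ereal_supZl//; last first.
  by apply/set0P; exists 0; exists set0; [exact: fsets_set0|rewrite fsbig_set0].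
rewrite image_comp; congr ereal_sup; apply: eq_imagel => X [finX XS] /=.
rewrite !fsbig_finite//= !big_seq ge0_sume_distrr// => x.
by rewrite in_fset_set// inE => /XS /f0.
Qed.

Lemma esumT_fin [R : realType] (I : finType) (f : I -> \bar R) : (forall i, 0 <= f i) ->
  \esum_(i in [set: I]) f i = \sum_(i : I) f i.
Proof.
move=> f0; rewrite esum_fset//; last exact: finite_finset.
rewrite -big_enum [RHS]fsbig_seq ?enum_uniq//; apply: eq_fsbigl.
by apply/seteqP; split=> x //= _; rewrite mem_enum.
Qed.

Lemma gt0_mule_lty [R : realType] (c : R) (x : \bar R) : (0 < c)%R ->
  (c%:E * x < +oo) = (x < +oo).
Proof.
move=> c0; case: x => [x||]; first by rewrite -EFinM !ltry.
  by rewrite gt0_muley ?lte_fin.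
by rewrite gt0_muleNy ?lte_fin.
Qed.

End ExtendedSums.

Lemma emx_pow_ge0 [R : realType] [T : countType] [A : T -> T -> R] :
  (forall a b, 0 <= A a b) -> forall m a b, (0 <= emx_pow (emx_of A) m a b)%E.
Proof.
move=> A0; elim=> [|m IHm] a b /=; first by rewrite /emx_id; case: ifP.
by apply: esum_ge0 => c _; rewrite mule_ge0 ?lee_fin.
Qed.

Section Lumping.
Variables (R : realType) (I : finType) (T : countType).
Variables (B : I * T -> I * T -> R) (C : T -> T -> R) (g : I -> R).
Hypotheses (B_ge0 : forall p q, 0 <= B p q) (C_ge0 : forall a b, 0 <= C a b).
Hypothesis g_gt0 : forall i, 0 < g i.
Hypothesis B_lumps_C : forall l c b, \sum_j B (l, c) (j, b) * g j = g l * C c b.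

Local Notation PB := (emx_pow (emx_of B)).
Local Notation PC := (emx_pow (emx_of C)).

Let BE_ge0 p q : (0 <= (B p q)%:E)%E. Proof. by rewrite lee_fin. Qed.
Let CE_ge0 a b : (0 <= (C a b)%:E)%E. Proof. by rewrite lee_fin. Qed.
Let gE_ge0 i : (0 <= (g i)%:E)%E. Proof. by rewrite lee_fin ltW. Qed.
Let PB_ge0 := emx_pow_ge0 B_ge0.
Let PC_ge0 := emx_pow_ge0 C_ge0.

Local Ltac nonneg := repeat apply: mule_ge0;
  by [exact: BE_ge0 | exact: CE_ge0 | exact: gE_ge0 | exact: PB_ge0 | exact: PC_ge0
      | rewrite lee_fin exprn_ge0].

Local Open Scope ereal_scope.

Lemma lump_pow m i a b :
  \sum_j PB m (i, a) (j, b) * (g j)%:E = (g i)%:E * PC m a b.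
Proof.
elim: m b => [|m IHm] b /=.
  rewrite /emx_id (bigD1 i)//= big1 ?adde0 => [|j ji].
    by rewrite xpair_eqE eqxx /= muleC.
  by rewrite xpair_eqE eq_sym (negPf ji) mul0e.
rewrite /emx_mul /emx_of.
transitivity (\esum_(q in [set: I * T]) \sum_j
    PB m (i, a) q * ((B q (j, b))%:E * (g j)%:E)).
  rewrite esum_sum => [|q j _ _]; last by nonneg.
  apply: eq_bigr => j _; rewrite muleC -ge0_esumZl => [||q _]; [|exact/ltW|by nonneg].
  by apply: eq_esum => q _; rewrite muleC -muleA.
transitivity (\esum_(q in [set: I * T])
    (PB m (i, a) (q.1, q.2) * (g q.1)%:E) * (C q.2 b)%:E).
  apply: eq_esum => -[l c] _ /=.
  rewrite -ge0_sume_distrr => [|j _]; last by nonneg.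
  by rewrite sumEFin B_lumps_C EFinM muleA.
have -> : [set: I * T] = [set: I] `*`` (fun => [set: T]) by apply/seteqP; split=> -[].
rewrite -(esum_esum (a := fun l c => PB m (i, a) (l, c) * (g l)%:E * (C c b)%:E))
  => [|l c _ _]; last by nonneg.
rewrite esumT_fin => [|l]; last by apply: esum_ge0 => c _; nonneg.
rewrite -esum_sum => [|c l _ _]; last by nonneg.
rewrite -ge0_esumZl => [||c _]; [|exact/ltW|by nonneg].
apply: eq_esum => c _; rewrite -ge0_sume_distrl => [|l _]; last by nonneg.
by rewrite IHm muleA.
Qed.

Lemma lump_series (r : R) i a b : (0 <= r)%R ->
  ((g i)%:E * (\esum_(n in [set: nat]) (r ^+ n)%:E * PC n a b) =
   \sum_j (\esum_(n in [set: nat]) ((r ^+ n)%:E * PB n (i, a) (j, b))) * (g j)%:E)%E.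
Proof.
move=> r0; rewrite -ge0_esumZl => [||n _]; [|exact/ltW|by nonneg].
transitivity (\esum_(n in [set: nat]) \sum_j
    ((r ^+ n)%:E * PB n (i, a) (j, b)) * (g j)%:E).
  apply: eq_esum => n _; rewrite muleCA -lump_pow ge0_sume_distrr => [|j _]; last by nonneg.
  by apply: eq_bigr => j _; rewrite muleA.
rewrite esum_sum => [|n j _ _]; last by nonneg.
apply: eq_bigr => j _; rewrite muleC -ge0_esumZl => [||n _]; [|exact/ltW|by nonneg].
by apply: eq_esum => n _; rewrite muleC.
Qed.

Lemma cp_lump (i0 : I) : cp C = cp B.
Proof.
rewrite /cp; congr (ereal_sup (image _ _)); apply/funext => r; apply/propext.
split=> -[r0 fin]; split=> //.
  move=> [i a] [j b]; have fin_sum := fin a b.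
  rewrite -(gt0_mule_lty _ _ (g_gt0 i)) lump_series// in fin_sum.
  rewrite -(gt0_mule_lty _ _ (g_gt0 j)) muleC; apply: le_lt_trans fin_sum.
  rewrite (bigD1 j)//= leeDl// sume_ge0// => l _.
  by apply: mule_ge0 => //; apply: esum_ge0 => n _; nonneg.
move=> a b; rewrite -(gt0_mule_lty _ _ (g_gt0 i0)) lump_series//.
by apply: lte_sum_pinfty => j _; rewrite muleC (gt0_mule_lty _ _ (g_gt0 j)).
Qed.

End Lumping.

Arguments cp_lump {R I T B C g}.

Lemma sum_ord_eq_if [V : nmodType] (n m : nat) (F : 'I_n.+1 -> V) :
  \sum_(i < n.+1) (if (i : nat) == m then F i else 0) =
  if (m <= n)%N then F (inord m) else 0.
Proof.
rewrite -big_mkcond /=; case: leqP => [mn|nm].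
  by apply: big_pred1 => i /=; rewrite -(inj_eq val_inj) /= inordK.
by rewrite big_pred0 // => i; apply/negbTE; rewrite neq_ltn (leq_trans (ltn_ord i)).
Qed.

Lemma sum_ord_andb_eq_if [V : nmodType] (n m : nat) (b : bool) (F : 'I_n.+1 -> V) :
  \sum_(i < n.+1) (if b && ((i : nat) == m) then F i else 0) =
  if b && (m <= n)%N then F (inord m) else 0.
Proof. by case: b; [exact: sum_ord_eq_if | rewrite big1]. Qed.

Section BlockMatrix.
Variables (R : realType) (T : Type) (Cm1 C0 C1 : T -> T -> R).
Hypotheses (Cm1_ge0 : forall a b, 0 <= Cm1 a b) (C0_ge0 : forall a b, 0 <= C0 a b)
  (C1_ge0 : forall a b, 0 <= C1 a b).

Lemma Cstar_ge0 theta a b : 0 <= Cstar Cm1 C0 C1 theta a b.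
Proof. by rewrite /Cstar !addr_ge0 ?mulr_ge0 ?expR_ge0. Qed.

Lemma Cblock_ge0 k theta p q : 0 <= Cblock Cm1 C0 C1 k theta p q.
Proof. by rewrite /Cblock /= !addr_ge0 //; case: ifP; rewrite ?mulr_ge0 ?expR_ge0. Qed.

End BlockMatrix.

Arguments Cstar_ge0 {R T Cm1 C0 C1}.
Arguments Cblock_ge0 {R T Cm1 C0 C1}.

Section BlockLumping.
Variables (R : realType) (T : Type) (Cm1 C0 C1 : T -> T -> R) (n : nat) (theta : R).

Local Notation w i := (expR ((i : nat)%:R * theta)).

Lemma Cblock_lump (l : 'I_n.+1) c b :
  \sum_j Cblock Cm1 C0 C1 n.+1 (theta *+ n.+1) (l, c) (j, b) * w j =
  w l * Cstar Cm1 C0 C1 theta c b.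
Proof.
have wS i : w i.+1 = w i * expR theta by rewrite -expRD -natr1 mulrDl mul1r.
have w0 : w 0%N = 1 by rewrite mulr0n mul0r expR0.
have corner_lo : expR (theta *- n.+1) * w n = expR (- theta).
  by rewrite -expRD; congr expR; ring.
have corner_hi : expR (theta *+ n.+1) = w n * expR theta.
  by rewrite -expRD; congr expR; ring.
rewrite /Cblock /=.
under eq_bigr do rewrite !mulrDl !(fun_if (GRing.mul^~ _)) !mul0r.
rewrite !big_split /= sum_ord_eq_if inordK ?ltn_ord // -ltnS ltn_ord sum_ord_eq_if.
have -> : \sum_(j < n.+1) (if j.+1 == l then Cm1 c b * w j else 0) =
    if (0 < l)%N then Cm1 c b * w l * expR (- theta) else 0.
  case: (nat_of_ord l) (ltn_ord l) => [|k] lt_kn; first by rewrite big1.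
  under eq_bigr do rewrite eqSS.
  have le_kn : (k <= n)%N := ltnW lt_kn.
  by rewrite sum_ord_eq_if le_kn inordK // wS -!mulrA -expRD subrr expR0 mulr1.
rewrite !sum_ord_andb_eq_if leqnn leq0n !andbT (inordK (ltnSn n)) (inordK (ltn0Sn n)).
rewrite w0 mulr1 (mulrAC (expR _)) corner_lo corner_hi.
case: l => k /=; rewrite ltnS leq_eqVlt /Cstar => /orP[/eqP->|lt_kn].
  rewrite ltnn eqxx; have [->|_] := posnP n; last by ring.
  by rewrite w0 /=; ring.
rewrite lt_kn (ltn_eqF lt_kn) inordK // wS; have [->|_] := posnP k; last by ring.
by rewrite w0 /=; ring.
Qed.
End BlockLumping.

Arguments Cblock_lump {R T Cm1 C0 C1 n theta}.

Theorem propositionA1 (R : realType) (T : countType) (Cm1 C0 C1 : T -> T -> R) :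
  (forall a b, 0 <= Cm1 a b) -> (forall a b, 0 <= C0 a b) -> (forall a b, 0 <= C1 a b) ->
  mx_powers_finite (Cstar Cm1 C0 C1 0) ->
  mx_irreducible (Cstar Cm1 C0 C1 0) ->
  forall (k : nat), (0 < k)%N ->
  forall theta : R,
    cp (Cstar Cm1 C0 C1 theta) = cp (Cblock Cm1 C0 C1 k (theta *+ k)).
Proof.
move=> Cm1_ge0 C0_ge0 C1_ge0 _ _ [//|n] _ theta.
apply: (cp_lump (g := fun j : 'I_n.+1 => expR (j%:R * theta)) _ _ _ _ ord0).
- exact: Cblock_ge0.
- exact: Cstar_ge0.
- by move=> j; apply: expR_gt0.
- exact: Cblock_lump.
Qed.
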